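(* Let $\underline c<\overline c$ and $\underline s<\overline s$ be real numbers and write $\phi(c,s)=\sqrt{c^2+s^2}$. Suppose $$\phi(\overline c,\overline s)+\phi(\underline c,\underline s)-\phi(\overline c,\underline s)-\phi(\underline c,\overline s)<0.$$ Define $\eta^3=\frac{\phi(\overline c,\underline s)-\phi(\underline c,\underline s)}{\overline c-\underline c}$, $\delta^3=\frac{\phi(\underline c,\overline s)-\phi(\underline c,\underline s)}{\overline s-\underline s}$, $\nu^3=\phi(\underline c,\underline s)-\eta^3\underline c-\delta^3\underline s$, and $\eta^4=\frac{\phi(\overline c,\overline s)-\phi(\underline c,\overline s)}{\overline c-\underline c}$, $\delta^4=\frac{\phi(\overline c,\overline s)-\phi(\overline c,\underline s)}{\overline s-\underline s}$, $\nu^4=\phi(\overline c,\overline s)-\eta^4\overline c-\delta^4\overline s$. Then for $n=3,4$ and all $(c,s)\in[\underline c,\overline c]\times[\underline s,\overline s]$ we have $\nu^n+\eta^n c+\delta^n s\ge \sqrt{c^2+s^2}$. *)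

From Stdlib Require Import Reals.
Open Scope R_scope.

Definition phi (c s : R) : R := sqrt (c ^ 2 + s ^ 2).

(* [phi] is the Euclidean norm, hence convex.  Convexity along the two
   coordinate directions bounds [phi] on the rectangle by the bilinear
   interpolation [B] of its four corner values.  Writing [c], [s] in affine
   coordinates [a], [b] in [0,1], the plane [n = 3] equals [B - a b D] and the
   plane [n = 4] equals [B - (1-a)(1-b) D], where [D < 0] is the mixed
   difference of the hypothesis; both therefore dominate [B >= phi]. *)

From Stdlib Require Import Reals Lra Psatz.
Open Scope R_scope.

Definition bilerp (p00 p01 p10 p11 a b : R) : R :=
  (1 - a) * ((1 - b) * p00 + b * p01) + a * ((1 - b) * p10 + b * p11).

Lemma sqrt_le_of_le_pow2 (x y : R) : 0 <= y -> x <= y ^ 2 -> sqrt x <= y.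
Proof.
  intros hy hx. rewrite <- (sqrt_pow2 y hy). now apply sqrt_le_1_alt.
Qed.

Lemma phi_pow2 (x y : R) : phi x y ^ 2 = x ^ 2 + y ^ 2.
Proof. apply pow2_sqrt. nra. Qed.

Lemma phi_cauchy (x1 y1 x2 y2 : R) :
  x1 * x2 + y1 * y2 <= phi x1 y1 * phi x2 y2.
Proof. unfold phi. rewrite <- !Rsqr_pow2. apply sqrt_cauchy. Qed.

Lemma phi_convex (t x1 y1 x2 y2 : R) : 0 <= t <= 1 ->
  phi ((1 - t) * x1 + t * x2) ((1 - t) * y1 + t * y2)
  <= (1 - t) * phi x1 y1 + t * phi x2 y2.
Proof.
  intros ht.
  pose proof (phi_pow2 x1 y1). pose proof (phi_pow2 x2 y2).
  pose proof (sqrt_pos (x1 ^ 2 + y1 ^ 2)). pose proof (sqrt_pos (x2 ^ 2 + y2 ^ 2)).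
  pose proof (phi_cauchy x1 y1 x2 y2).
  unfold phi at 1. fold (phi x1 y1) (phi x2 y2) in *.
  apply sqrt_le_of_le_pow2; [nra|].
  assert (0 <= t * (1 - t) * (phi x1 y1 * phi x2 y2 - (x1 * x2 + y1 * y2)))
    by (apply Rmult_le_pos; nra).
  nra.
Qed.

Lemma phi_le_bilerp (cl cu sl su a b : R) : 0 <= a <= 1 -> 0 <= b <= 1 ->
  phi ((1 - a) * cl + a * cu) ((1 - b) * sl + b * su)
  <= bilerp (phi cl sl) (phi cl su) (phi cu sl) (phi cu su) a b.
Proof.
  intros ha hb. set (s := (1 - b) * sl + b * su).
  assert (hrow : forall c, phi c s <= (1 - b) * phi c sl + b * phi c su).
  { intros c. unfold s.
    replace c with ((1 - b) * c + b * c) at 1 by ring. now apply phi_convex. }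
  pose proof (hrow cl). pose proof (hrow cu).
  pose proof (phi_convex a cl s cu s ha) as hcol.
  replace ((1 - a) * s + a * s) with s in hcol by ring.
  unfold bilerp. nra.
Qed.

Lemma segment_affine_param (l u x : R) : l < u -> l <= x <= u ->
  exists a, 0 <= a <= 1 /\ x = (1 - a) * l + a * u.
Proof.
  intros hlu hx. set (a := (x - l) / (u - l)).
  assert (e : x - l = a * (u - l)) by (unfold a; field; lra).
  exists a. repeat split; nra.
Qed.

Theorem proposition4 (cl cu sl su : R) (hc : cl < cu) (hs : sl < su)
  (hneg : phi cu su + phi cl sl - phi cu sl - phi cl su < 0) :
  let eta3 := (phi cu sl - phi cl sl) / (cu - cl) in
  let delta3 := (phi cl su - phi cl sl) / (su - sl) in
  let nu3 := phi cl sl - eta3 * cl - delta3 * sl in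
  let eta4 := (phi cu su - phi cl su) / (cu - cl) in
  let delta4 := (phi cu su - phi cu sl) / (su - sl) in
  let nu4 := phi cu su - eta4 * cu - delta4 * su in
  (forall c s : R, cl <= c <= cu -> sl <= s <= su ->
     nu3 + eta3 * c + delta3 * s >= sqrt (c ^ 2 + s ^ 2)) /\
  (forall c s : R, cl <= c <= cu -> sl <= s <= su ->
     nu4 + eta4 * c + delta4 * s >= sqrt (c ^ 2 + s ^ 2)).
Proof.
  intros eta3 delta3 nu3 eta4 delta4 nu4.
  set (D := phi cu su + phi cl sl - phi cu sl - phi cl su) in hneg.
  set (B := bilerp (phi cl sl) (phi cl su) (phi cu sl) (phi cu su)).
  split; intros c s hcI hsI;
    destruct (segment_affine_param cl cu c hc hcI) as [a [ha ->]];
    destruct (segment_affine_param sl su s hs hsI) as [b [hb ->]];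
    pose proof (phi_le_bilerp cl cu sl su a b ha hb) as hB;
    fold B in hB; unfold phi at 1 in hB; apply Rle_ge.
  - assert (hplane : nu3 + eta3 * ((1 - a) * cl + a * cu)
                     + delta3 * ((1 - b) * sl + b * su) = B a b - a * b * D)
      by (unfold nu3, eta3, delta3, B, bilerp, D; field; lra).
    rewrite hplane. assert (0 <= a * b * - D) by (apply Rmult_le_pos; nra). lra.
  - assert (hplane : nu4 + eta4 * ((1 - a) * cl + a * cu)
                     + delta4 * ((1 - b) * sl + b * su)
                     = B a b - (1 - a) * (1 - b) * D)
      by (unfold nu4, eta4, delta4, B, bilerp, D; field; lra).
    rewrite hplane.
    assert (0 <= (1 - a) * (1 - b) * - D) by (apply Rmult_le_pos; nra). lra.
Qed.
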